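(* Let $g\ge 1$. The complex free-nilpotent Lie algebra $N(2,g)$ of nilpotency class $2$ on $g$ generators admits a periodic derivation if and only if $g\le 3$.
   Context: $N(c,g)$ denotes the free-nilpotent complex Lie algebra of nilpotency class $c$ on $g$ generators (the free Lie algebra on $g$ generators modulo the $(c+1)$-st term of its lower central series). A derivation $D$ of a Lie algebra is called periodic if there is an integer $m\ge 1$ with $D^m=\mathrm{id}$. *)

From HB Require Import structures.
From mathcomp Require Import all_boot all_order all_algebra.
From mathcomp Require Import reals complex.
Set Implicit Arguments. Unset Strict Implicit. Unset Printing Implicit Defensive.
Import Order.TTheory GRing.Theory Num.Theory.
Local Open Scope ring_scope.

(* Index set of the basis f_{ij} (i < j) of Lambda^2 V, V = C^g. *)
Definition pairs (g : nat) := {p : 'I_g * 'I_g | (p.1 < p.2)%N}.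

(* Underlying vector space of N(2,g) = V (+) Lambda^2 V, with basis
   e_1..e_g (generators) and f_{ij} = [e_i, e_j] (i < j). *)
Notation N2 K g := {ffun ('I_g + pairs g)%type -> K}.

(* Coordinates: inl i is the coefficient of e_i, inr (i,j) that of f_{ij}.
   Lie bracket of N(2,g): [(v,a),(w,b)] = (0, v /\ w), i.e.
   [x,y]_{f_ij} = x_i y_j - x_j y_i, [x,y]_{e_i} = 0. *)
Definition N2_bracket (K : fieldType) (g : nat) (x y : N2 K g) : N2 K g :=
  [ffun k => match k with
             | inl _ => 0
             | inr p => x (inl (sval p).1) * y (inl (sval p).2)
                        - x (inl (sval p).2) * y (inl (sval p).1)
             end].

Definition is_derivation (K : fieldType) (g : nat) (D : N2 K g -> N2 K g) : Prop :=
  (forall x y : N2 K g, D (x + y) = D x + D y) /\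
  (forall (a : K) (x : N2 K g),
      D [ffun k => a * x k] = [ffun k => a * D x k]) /\
  (forall x y : N2 K g, D (N2_bracket x y) = N2_bracket (D x) y + N2_bracket x (D y)).

Definition is_periodic (T : Type) (D : T -> T) : Prop :=
  exists m : nat, (1 <= m)%N /\ forall x, iter m D x = x.

(* A periodic derivation D induces a periodic, hence diagonalizable, map on the
   generators V = N / [N, N]; its eigenvalues are roots of unity.  For independent
   eigenvectors v, w of weights a, b, the bracket [v, w] is a nonzero eigenvector of D
   of weight a + b, so a, b and a + b all lie on the unit circle, which forces
   a^2 + ab + b^2 = 0.  No four numbers are pairwise related in this way, so g <= 3.
   Conversely, weights 1, w, w^2 on the generators, w a primitive cube root of unity,
   define a diagonal derivation of order 6. *)

From mathcomp Require Import all_boot all_order all_algebra.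
From mathcomp Require Import reals complex.
From mathcomp Require Import separable ring.
Set Implicit Arguments. Unset Strict Implicit. Unset Printing Implicit Defensive.
Import Order.TTheory GRing.Theory Num.Theory.
Local Open Scope ring_scope.

Section UnityRoots.
Variable K : numClosedFieldType.

Definition cyclo3 (x y : K) := x ^+ 2 + x * y + y ^+ 2.

Lemma unity_root_mul_conj (x : K) m : (0 < m)%N -> x ^+ m = 1 -> x * x^* = 1.
Proof.
move=> m_gt0 xm1; have : `|x| ^+ m == 1 by rewrite -normrX xm1 normr1.
by rewrite pexpr_eq1 // -normCK => /eqP ->; rewrite expr1n.
Qed.

(* If a, b and a + b lie on the unit circle, then b / a is a primitive cube root of 1. *)
Lemma unity_root_add_cyclo3 (a b : K) m : (0 < m)%N ->
  a ^+ m = 1 -> b ^+ m = 1 -> (a + b) ^+ m = 1 -> cyclo3 a b = 0.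
Proof.
move=> m_gt0 am1 bm1 abm1.
have aa1 := unity_root_mul_conj m_gt0 am1; have bb1 := unity_root_mul_conj m_gt0 bm1.
have := unity_root_mul_conj m_gt0 abm1; rewrite rmorphD /= => abab1.
have -> : cyclo3 a b = a * b * ((a + b) * (a^* + b^*) - a * a^* - b * b^* + 1)
    + a ^+ 2 * (1 - b * b^*) + b ^+ 2 * (1 - a * a^*) by rewrite /cyclo3; ring.
by rewrite aa1 bb1 abab1 !subrr; ring.
Qed.

Lemma cyclo3_diag_neq0 (y : K) : y != 0 -> cyclo3 y y != 0.
Proof.
move=> y_neq0; have -> : cyclo3 y y = 3%:R * y ^+ 2 by rewrite /cyclo3; ring.
by rewrite mulf_neq0 ?pnatr_eq0 ?expf_neq0.
Qed.

Lemma cyclo3_triangle (a b c : K) : b != 0 ->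
  cyclo3 a b = 0 -> cyclo3 a c = 0 -> cyclo3 b c = 0 -> a + b + c = 0.
Proof.
move=> b_neq0 ab0 ac0 bc0.
have : (b - c) * (a + b + c) = 0.
  have -> : (b - c) * (a + b + c) = cyclo3 a b - cyclo3 a c by rewrite /cyclo3; ring.
  by rewrite ab0 ac0 subrr.
move/eqP; rewrite mulf_eq0 subr_eq0 => /orP[/eqP bc|/eqP //].
by move: bc0; rewrite -bc => /eqP; rewrite (negbTE (cyclo3_diag_neq0 b_neq0)).
Qed.

Lemma cyclo3_no_four (a b c d : K) : b != 0 -> c != 0 ->
  cyclo3 a b = 0 -> cyclo3 a c = 0 -> cyclo3 a d = 0 ->
  cyclo3 b c = 0 -> cyclo3 b d = 0 -> cyclo3 c d = 0 -> False.
Proof.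
move=> b_neq0 c_neq0 ab0 ac0 ad0 bc0 bd0 cd0.
have abc := cyclo3_triangle b_neq0 ab0 ac0 bc0.
have abd := cyclo3_triangle b_neq0 ab0 ad0 bd0.
have cd : c = d by apply: (addrI (a + b)); rewrite abc abd.
by move: cd0; rewrite -cd => /eqP; rewrite (negbTE (cyclo3_diag_neq0 c_neq0)).
Qed.

Lemma cyclo3_expr6 (a b : K) : a ^+ 3 = 1 -> b ^+ 3 = 1 -> cyclo3 a b = 0 ->
  (a + b) ^+ 6 = 1.
Proof.
move=> a3 b3 ab0.
have sq : (a + b) ^+ 2 = a * b by rewrite -[RHS]addr0 -ab0 /cyclo3; ring.
by rewrite (exprM _ 2 3) sq exprMn a3 b3 mulr1.
Qed.

Lemma exists_cyclo3_root : exists w : K, cyclo3 1 w = 0.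
Proof.
exists ((-1 + 'i * sqrtC 3%:R) / 2%:R).
have two_neq0 : (2%:R : K) != 0 by rewrite pnatr_eq0.
rewrite /cyclo3 (_ : _ + _ = ('i ^+ 2 * sqrtC 3%:R ^+ 2 + 3%:R) / 4%:R); last by field.
by rewrite sqrCi sqrtCK (_ : _ + _ = 0) ?mul0r //; ring.
Qed.

Lemma cyclo3_expr3 (w : K) : cyclo3 1 w = 0 -> w ^+ 3 = 1.
Proof.
move=> w_cyclo3; apply/eqP; rewrite -subr_eq0.
have -> : w ^+ 3 - 1 = (w - 1) * cyclo3 1 w by rewrite /cyclo3; ring.
by rewrite w_cyclo3 mulr0.
Qed.

End UnityRoots.

Section UnityRootMatrices.
Variable K : fieldType.

Lemma separable_Xn_sub_1 m : (m%:R : K) != 0 -> separable_poly ('X^m - 1 : {poly K}).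
Proof.
move=> m_neq0; have m_gt0 : (0 < m)%N by rewrite lt0n; apply: contraNneq m_neq0 => ->.
rewrite unlock derivB derivXn derivC subr0.
apply/Bezout_coprimepP; exists (-1, m%:R^-1 *: 'X) => /=.
rewrite -scalerAl mulrnAr -exprS prednK // -scaler_nat scalerA mulVf // scale1r.
by rewrite (_ : _ + _ = 1) ?eqpxx //; ring.
Qed.

Lemma row_unitmx_neq0 n (P : 'M[K]_n) i : P \in unitmx -> row i P != 0.
Proof.
move=> P_unit; apply/eqP => /(congr1 (mulmx^~ (invmx P))).
rewrite rowE -mulmxA mulmxV // mulmx1 mul0mx => /rowP /(_ i).
by rewrite !mxE !eqxx => /eqP; rewrite oner_eq0.
Qed.

Lemma row_unitmx_neq_scale n (P : 'M[K]_n) i j c : P \in unitmx -> i != j ->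
  row j P != c *: row i P.
Proof.
move=> P_unit ij; apply/eqP => /(congr1 (mulmx^~ (invmx P))).
rewrite -scalemxAl !rowE -!mulmxA mulmxV // !mulmx1 => /rowP /(_ j).
by rewrite !mxE !eqxx eq_sym (negbTE ij) mulr0 => /eqP; rewrite oner_eq0.
Qed.

Lemma eigen_mulmx_exp n (A : 'M[K]_n) (v : 'rV_n) l k :
  v *m A = l *: v -> v *m A ^+ k = l ^+ k *: v.
Proof.
move=> vA; elim: k => [|k IH]; first by rewrite expr0 mulmx1 scale1r.
by rewrite exprSr mulmxA IH -scalemxAl vA scalerA -exprSr.
Qed.

Lemma eigenvalue_unity_root n (A : 'M[K]_n) (v : 'rV_n) l m :
  A ^+ m = 1 -> v != 0 -> v *m A = l *: v -> l ^+ m = 1.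
Proof.
move=> Am1 v_neq0 /(eigen_mulmx_exp m); rewrite Am1 mulmx1 => vlv.
have : (l ^+ m - 1) *: v = 0 by rewrite scalerBl scale1r -vlv subrr.
by move/eqP; rewrite scaler_eq0 (negbTE v_neq0) orbF subr_eq0 => /eqP.
Qed.

End UnityRootMatrices.

Lemma unity_root_mx_eigenbasis (K : closedFieldType) n m (A : 'M[K]_n.+1) :
    (m%:R : K) != 0 -> A ^+ m = 1 ->
  exists2 P : 'M_n.+1, P \in unitmx &
    exists d : 'rV_n.+1, forall i, row i P *m A = d 0 i *: row i P.
Proof.
move=> m_neq0 Am1; have m_gt0 : (0 < m)%N by rewrite lt0n; apply: contraNneq m_neq0 => ->.
have [rs Xm1E] := closed_field_poly_normal ('X^m - 1 : {poly K}).
have lead1 : lead_coef ('X^m - 1 : {poly K}) = 1 by rewrite -polyC1 lead_coefXnsubC.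
rewrite lead1 scale1r in Xm1E.
have [P P_unit /similar_diagPex[d /(similarP P_unit) PA]] : diagonalizable A.
  apply/diagonalizableP; exists rs; last rewrite -Xm1E.
    by rewrite -separable_prod_XsubC -Xm1E separable_Xn_sub_1.
  by apply: mxminpoly_min; rewrite rmorphB /= rmorphXn /= horner_mx_X rmorph1 Am1 subrr.
exists P => //; exists d => i.
by rewrite -row_mul PA row_mul row_diag_mx -scalemxAl -rowE.
Qed.

Section DiagonalDerivation.
Variables (K : fieldType) (g : nat) (lam : 'I_g -> K).

Definition diag_weight (k : 'I_g + pairs g) : K :=
  match k with inl i => lam i | inr p => lam (sval p).1 + lam (sval p).2 end.

Definition diag_der (x : N2 K g) : N2 K g := [ffun k => diag_weight k * x k].

Lemma diag_der_is_derivation : is_derivation diag_der.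
Proof.
split; [|split].
- by move=> x y; apply/ffunP => k; rewrite !ffunE mulrDr.
- by move=> a x; apply/ffunP => k; rewrite !ffunE mulrCA.
- move=> x y; apply/ffunP => -[i|p]; rewrite !ffunE /=; first by rewrite mulr0 addr0.
  ring.
Qed.

Lemma iter_diag_der m x : iter m diag_der x = [ffun k => diag_weight k ^+ m * x k].
Proof.
elim: m => [|m IH]; first by apply/ffunP => k; rewrite ffunE mul1r.
by rewrite iterS IH; apply/ffunP => k; rewrite !ffunE mulrA -exprS.
Qed.

Lemma diag_der_periodic m : (0 < m)%N -> (forall k, diag_weight k ^+ m = 1) ->
  is_periodic diag_der.
Proof.
move=> m_gt0 weight_m1; exists m; split => // x; rewrite iter_diag_der.
by apply/ffunP => k; rewrite ffunE weight_m1 mul1r.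
Qed.

End DiagonalDerivation.

Section Generators.
Variables (K : fieldType) (g : nat).

Definition of_gens (v : 'rV[K]_g) : N2 K g :=
  [ffun k => if k is inl j then v 0 j else 0].

Definition gens (x : N2 K g) : 'rV[K]_g := \row_j x (inl j).

Lemma gens_of_gens v : gens (of_gens v) = v.
Proof. by apply/rowP => j; rewrite !mxE ffunE. Qed.

Lemma of_gens_delta (a b : 'I_g) : of_gens (delta_mx 0 a) (inl b) = (b == a)%:R.
Proof. by rewrite ffunE mxE eqxx. Qed.

Lemma of_gens_sum_delta v :
  of_gens v = \sum_i [ffun k => v 0 i * of_gens (delta_mx 0 i) k].
Proof.
apply/ffunP => -[j|q]; rewrite sum_ffunE ffunE; last first.
  by rewrite big1 // => i _; rewrite !ffunE mulr0.
rewrite (bigD1 j) //= big1 ?addr0 => [|i ij]; rewrite ffunE of_gens_delta.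
  by rewrite eqxx mulr1.
by rewrite eq_sym (negbTE ij) mulr0.
Qed.

Definition basis_bracket (p : pairs g) : N2 K g :=
  N2_bracket (of_gens (delta_mx 0 (sval p).1)) (of_gens (delta_mx 0 (sval p).2)).

Lemma basis_bracket_pair (p q : pairs g) : basis_bracket p (inr q) = (q == p)%:R.
Proof.
case: p q => [[a b] /= ab] [[c d] /= cd]; rewrite ffunE !of_gens_delta /=.
have -> : (d == a)%:R * (c == b)%:R = 0 :> K.
  case: eqP => [da|_]; case: eqP => [cb|_]; rewrite ?mulr0 ?mul0r //.
  by move: cd; rewrite da cb => /(ltn_trans ab); rewrite ltnn.
have -> : (exist _ (c, d) cd == exist _ (a, b) ab :> pairs g) = (c == a) && (d == b) by [].
by rewrite subr0; do 2 case: eqP; rewrite ?mulr1 ?mulr0.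
Qed.

Lemma derived_decomposition (y : N2 K g) : (forall j, y (inl j) = 0) ->
  y = \sum_(p : pairs g) [ffun k => y (inr p) * basis_bracket p k].
Proof.
move=> y_gens0; apply/ffunP => -[i|q]; rewrite sum_ffunE.
  by rewrite y_gens0 big1 // => p _; rewrite !ffunE mulr0.
rewrite (bigD1 q) //= big1 => [|p pq]; rewrite ffunE basis_bracket_pair.
  by rewrite eqxx mulr1 addr0.
by rewrite eq_sym (negbTE pq) mulr0.
Qed.

Lemma bracket_of_gens_neq0 (v w : 'rV[K]_g) : v != 0 -> (forall c, w != c *: v) ->
  exists p, N2_bracket (of_gens v) (of_gens w) (inr p) != 0.
Proof.
move=> v_neq0 w_indep; apply/existsP; apply: contraT.
rewrite negb_exists => /forallP bracket0.
have vw_sym (a b : 'I_g) : v 0 a * w 0 b = v 0 b * w 0 a.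
  have pair_sym (a' b' : 'I_g) (ab : (a' < b')%N) : v 0 a' * w 0 b' = v 0 b' * w 0 a'.
    apply/eqP; rewrite -subr_eq0.
    by move: (bracket0 (exist _ (a', b') ab)); rewrite negbK !ffunE.
  case: (ltngtP a b) => [ab|ba|/val_inj -> //]; first exact: pair_sym.
  by rewrite (pair_sym b a).
have [k vk_neq0] : exists k, v 0 k != 0.
  apply/existsP; apply: contraNT v_neq0; rewrite negb_exists => /forallP v0.
  by apply/eqP/rowP => j; rewrite mxE; apply/eqP; rewrite -[_ == _]negbK v0.
case/eqP: (w_indep (w 0 k / v 0 k)); apply/rowP => b; rewrite mxE.
by apply: (mulfI vk_neq0); rewrite vw_sym; field.
Qed.

End Generators.

Section Derivation.
Variables (K : fieldType) (n : nat) (D : N2 K n.+1 -> N2 K n.+1).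
Hypothesis D_der : is_derivation D.
Local Notation N := (N2 K n.+1).

Lemma derivation0 : D 0 = 0.
Proof. by apply: (addrI (D 0)); rewrite -D_der.1 !addr0. Qed.

Lemma derivation_sum (I : finType) (F : I -> N) : D (\sum_i F i) = \sum_i D (F i).
Proof. exact: (big_morph D D_der.1 derivation0). Qed.

Lemma derivation_derived (y : N) :
  (forall j, y (inl j) = 0) -> forall j, D y (inl j) = 0.
Proof.
move=> y_gens0 j; rewrite (derived_decomposition y_gens0) derivation_sum sum_ffunE.
by rewrite big1 // => p _; rewrite D_der.2.1 ffunE D_der.2.2 !ffunE addr0 mulr0.
Qed.

Definition der_mx : 'M[K]_n.+1 := \matrix_(i, j) D (of_gens (delta_mx 0 i)) (inl j).

Lemma gens_derivation x : gens (D x) = gens x *m der_mx.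
Proof.
have x_split : x = of_gens (gens x) + (x - of_gens (gens x)) by rewrite addrC subrK.
have rest_gens0 j : (x - of_gens (gens x)) (inl j) = 0 by rewrite !ffunE mxE subrr.
apply/rowP => j; rewrite mxE {1}x_split D_der.1 ffunE (derivation_derived rest_gens0) addr0.
rewrite of_gens_sum_delta derivation_sum sum_ffunE mxE; apply: eq_bigr => i _.
by rewrite D_der.2.1 ffunE !mxE.
Qed.

Lemma gens_iter_derivation k x : gens (iter k D x) = gens x *m der_mx ^+ k.
Proof.
elim: k => [|k IH]; first by rewrite expr0 mulmx1.
by rewrite iterS gens_derivation IH exprSr mulmxA.
Qed.

Lemma der_mx_periodic m : (forall x, iter m D x = x) -> der_mx ^+ m = 1.
Proof.
move=> Dm_id; apply/row_matrixP => i; rewrite !rowE mulmx1.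
by have := gens_iter_derivation m (of_gens (delta_mx 0 i)); rewrite Dm_id gens_of_gens.
Qed.

Lemma derivation_eigen_gens (v : 'rV[K]_n.+1) l :
  v *m der_mx = l *: v -> forall j, D (of_gens v) (inl j) = l * v 0 j.
Proof.
move=> v_eigen j; have := congr1 (fun r : 'rV_n.+1 => r 0 j) (gens_derivation (of_gens v)).
by rewrite gens_of_gens v_eigen !mxE.
Qed.

Lemma iter_derivation_bracket (v w : 'rV[K]_n.+1) l u k :
  v *m der_mx = l *: v -> w *m der_mx = u *: w ->
  iter k D (N2_bracket (of_gens v) (of_gens w)) =
    [ffun q => (l + u) ^+ k * N2_bracket (of_gens v) (of_gens w) q].
Proof.
move=> v_eigen w_eigen; set b := N2_bracket _ _.
have Db : D b = [ffun q => (l + u) * b q].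
  rewrite D_der.2.2; apply/ffunP => -[j|p]; first by rewrite !ffunE mulr0 addr0.
  rewrite !ffunE !(derivation_eigen_gens v_eigen) !(derivation_eigen_gens w_eigen).
  ring.
elim: k => [|k IH]; first by apply/ffunP => q; rewrite [in RHS]ffunE expr0 mul1r.
by rewrite iterS IH D_der.2.1 Db; apply/ffunP => q; rewrite !ffunE mulrA -exprSr.
Qed.

End Derivation.

Lemma exists_periodic_derivation (K : numClosedFieldType) g : (g <= 3)%N ->
  exists D : N2 K g -> N2 K g, is_derivation D /\ is_periodic D.
Proof.
move=> g_le3; have [w w_cyclo3] := exists_cyclo3_root K.
have wi3 (i : nat) : (w ^+ i) ^+ 3 = 1.
  by rewrite -exprM mulnC exprM cyclo3_expr3 // expr1n.
have pair_cyclo3 (i j : 'I_g) : (i < j)%N -> cyclo3 (w ^+ i) (w ^+ j) = 0.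
  have j_lt3 : (j < 3)%N := leq_trans (ltn_ord j) g_le3.
  move: j_lt3; case: (nat_of_ord i) => [|[|[|?]]]; case: (nat_of_ord j) => [|[|[|?]]] //= _ _.
  - have -> : cyclo3 (w ^+ 0) (w ^+ 2) = cyclo3 1 w * (w ^+ 2 - w + 1).
      by rewrite /cyclo3; ring.
    by rewrite w_cyclo3 mul0r.
  - have -> : cyclo3 (w ^+ 1) (w ^+ 2) = cyclo3 1 w * w ^+ 2 by rewrite /cyclo3; ring.
    by rewrite w_cyclo3 mul0r.
exists (diag_der (fun i : 'I_g => w ^+ i)); split; first exact: diag_der_is_derivation.
apply: (@diag_der_periodic _ _ _ 6) => // -[i|[[i j] /= ij]] /=.
  by rewrite (exprM _ 3 2) wi3 expr1n.
exact: cyclo3_expr6 (wi3 _) (wi3 _) (pair_cyclo3 _ _ ij).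
Qed.

Lemma periodic_derivation_le3 (K : numClosedFieldType) g (D : N2 K g -> N2 K g) :
  is_derivation D -> is_periodic D -> (g <= 3)%N.
Proof.
case: g D => [//|n] D D_der [m [m_gt0 Dm_id]]; rewrite leqNgt; apply/negP => n_ge3.
have Am1 := der_mx_periodic D_der Dm_id.
have m_neq0 : (m%:R : K) != 0 by rewrite pnatr_eq0 -lt0n.
have [P P_unit [d eigen]] := unity_root_mx_eigenbasis m_neq0 Am1.
have d_root i : d 0 i ^+ m = 1.
  exact: eigenvalue_unity_root Am1 (row_unitmx_neq0 i P_unit) (eigen i).
have d_neq0 i : d 0 i != 0.
  apply/eqP => d0; move: (d_root i); rewrite d0 expr0n (gtn_eqF m_gt0) => /eqP.
  by rewrite eq_sym oner_eq0.
have d_cyclo3 i j : i != j -> cyclo3 (d 0 i) (d 0 j) = 0.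
  move=> ij; apply: unity_root_add_cyclo3 m_gt0 (d_root i) (d_root j) _.
  have [p bracket_neq0] := bracket_of_gens_neq0 (row_unitmx_neq0 i P_unit)
    (fun c => row_unitmx_neq_scale c P_unit ij).
  have := congr1 (fun x : N2 K n.+1 => x (inr p))
    (iter_derivation_bracket D_der m (eigen i) (eigen j)).
  rewrite Dm_id [X in _ = X -> _]ffunE -{1}[N2_bracket _ _ (inr p)]mul1r.
  by move=> /(mulIf bracket_neq0).
have inord_neq a b : (a <= 3)%N -> (b <= 3)%N -> a != b -> (inord a : 'I_n.+1) != inord b.
  move=> a_le3 b_le3; apply: contra_neq => /(congr1 val).
  by rewrite /= !inordK // (leq_trans _ n_ge3).
apply: (@cyclo3_no_four _ (d 0 (inord 0)) (d 0 (inord 1)) (d 0 (inord 2)) (d 0 (inord 3)));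
  by rewrite ?d_neq0 // d_cyclo3 // inord_neq.
Qed.

Theorem proposition2p14 (R : realType) (g : nat) (hg : (1 <= g)%N) :
  (exists D : N2 R[i] g -> N2 R[i] g, is_derivation D /\ is_periodic D)
  <-> (g <= 3)%N.
Proof.
split; last exact: exists_periodic_derivation.
by move=> [D [D_der D_periodic]]; exact: periodic_derivation_le3 D_der D_periodic.
Qed.
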